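(* (i) For integers $r\geq1$, $k_1\geq2$, $k_2,\ldots,k_r\geq1$, \[ \lim_{m\to\infty}\zeta^{\star}(k_1,\ldots,k_r,\{2\}^m)=\sum_{n_1\geq\cdots\geq n_r\geq1}\frac{2}{n_1^{k_1}\cdots n_{r-1}^{k_{r-1}}\,n_r^{k_r-1}(n_r+1)}. \] (ii) For every integer $p\geq2$, \[ \lim_{m\to\infty}\zeta^{\star}(\{p\}^m)=\prod_{n\geq2}\frac{1}{1-n^{-p}}. \]
   Context: $\zeta^{\star}(k_1,\ldots,k_r)=\sum_{n_1\geq\cdots\geq n_r\geq 1}\frac{1}{n_1^{k_1}\cdots n_r^{k_r}}$ for $k_1\geq2$, $k_2,\ldots,k_r\geq1$; $\{p\}^m$ denotes $m$ consecutive arguments equal to $p$. *)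

From Stdlib Require Import Reals List.
From Coquelicot Require Import Coquelicot.
Import ListNotations.
Open Scope R_scope.

(* Nested truncated sum over N >= n1 >= n2 >= ... >= nr >= 1:
   nested_trunc [f1; ...; fr] N = sum_{N>=n1>=...>=nr>=1} f1 n1 * ... * fr nr.
   The empty list gives the empty product 1. *)
Fixpoint nested_trunc (fs : list (nat -> R)) (N : nat) : R :=
  match fs with
  | [] => 1
  | f :: fs' => sum_n_m (fun n => f n * nested_trunc fs' n) 1 N
  end.

Definition inv_pow (k : nat) : nat -> R := fun n => / (INR n ^ k).

Definition zeta_star_trunc (ks : list nat) (N : nat) : R :=
  nested_trunc (map inv_pow ks) N.

(* zeta^star(k1,...,kr) = lim_{N -> oo} of the truncated sums
   (terms are positive, so this is the value of the multiple series). *)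
Definition zeta_star (ks : list nat) : R := real (Lim_seq (zeta_star_trunc ks)).

Definition rhs_i_trunc (ks : list nat) (N : nat) : R :=
  nested_trunc
    (map inv_pow (removelast ks) ++
     [fun n => 2 / (INR n ^ (last ks 0%nat - 1) * (INR n + 1))]) N.

Fixpoint euler_prod_trunc (p : nat) (N : nat) : R :=
  match N with
  | O => 1
  | S N' => if Nat.leb 2 N then euler_prod_trunc p N' * / (1 - / (INR N ^ p))
            else euler_prod_trunc p N'
  end.

From Stdlib Require Import Reals List Lra Lia Psatz.
From Coquelicot Require Import Coquelicot.
Import ListNotations.
Open Scope R_scope.

(* Write Z_N(m) for the truncation at N of zeta^star({p}^m).  Splitting off the terms with
   n_1 = N gives Z_N(m+1) = Z_(N-1)(m+1) + N^-p Z_N(m); by induction on N, m |-> Z_N(m)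
   increases to the partial Euler product E_N = prod_(n=2..N) 1/(1 - n^-p), the limit being
   the fixed point of x = E_(N-1) + N^-p x.  For p = 2 this product telescopes to
   2N/(N+1), so the innermost block n^-k_r Z_n(m) of zeta^star(k_1,...,k_r,{2}^m) tends to
   2/(n^(k_r-1)(n+1)).  Both limits then follow by exchanging lim_m and lim_N, which is
   legitimate because all truncations increase in N and are dominated by their limit in m.
   Finiteness of zeta^star(k_1,...,k_r) for k_1 >= 2 comes from zeta^star_n({1}^s) <= 2^s sqrt n,
   which leaves an outer sum dominated by 2^s sum n^(-3/2) <= 3 2^s. *)

Lemma sum_n_m_1_0 (f : nat -> R) : sum_n_m f 1 0 = 0.
Proof. rewrite sum_n_m_zero; [reflexivity | lia]. Qed.

Lemma sum_n_m_1_S (f : nat -> R) N : sum_n_m f 1 (S N) = sum_n_m f 1 N + f (S N).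
Proof. rewrite sum_n_Sm; [reflexivity | lia]. Qed.

Lemma sum_n_m_le_loc (f g : nat -> R) N :
  (forall n, (1 <= n <= N)%nat -> f n <= g n) -> sum_n_m f 1 N <= sum_n_m g 1 N.
Proof.
  induction N as [|N IH]; intros Hfg.
  - rewrite !sum_n_m_1_0; lra.
  - rewrite !sum_n_m_1_S.
    apply Rplus_le_compat; [apply IH; intros n Hn|]; apply Hfg; lia.
Qed.

Lemma sum_n_m_nonneg_loc (f : nat -> R) N :
  (forall n, (1 <= n <= N)%nat -> 0 <= f n) -> 0 <= sum_n_m f 1 N.
Proof.
  induction N as [|N IH]; intros Hf.
  - rewrite sum_n_m_1_0; lra.
  - rewrite sum_n_m_1_S.
    apply Rplus_le_le_0_compat; [apply IH; intros n Hn|]; apply Hf; lia.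
Qed.

Lemma sum_n_m_scal_l (c : R) (f : nat -> R) N :
  sum_n_m (fun n => c * f n) 1 N = c * sum_n_m f 1 N.
Proof. exact (sum_n_m_mult_l c f 1 N). Qed.

Lemma is_lim_seq_sum_n_m (u : nat -> nat -> R) (l : nat -> R) N :
  (forall n, (1 <= n <= N)%nat -> is_lim_seq (fun m => u m n) (l n)) ->
  is_lim_seq (fun m => sum_n_m (u m) 1 N) (sum_n_m l 1 N).
Proof.
  induction N as [|N IH]; intros Hu.
  - rewrite sum_n_m_1_0.
    apply is_lim_seq_ext with (fun _ => 0); [intros; now rewrite sum_n_m_1_0|].
    apply is_lim_seq_const.
  - rewrite sum_n_m_1_S.
    apply is_lim_seq_ext with (fun m => sum_n_m (u m) 1 N + u m (S N));
      [intros; now rewrite sum_n_m_1_S|].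
    apply is_lim_seq_plus'; [apply IH; intros n Hn|]; apply Hu; lia.
Qed.

Lemma sum_n_m_le_telescope (u v : nat -> R) N :
  (forall n, (1 <= n)%nat -> u (S n) <= v (S n) - v n) ->
  (1 <= N)%nat -> sum_n_m u 1 N <= u 1%nat + v N - v 1%nat.
Proof.
  intros Huv HN. induction N as [|N IH]; [lia|].
  rewrite sum_n_m_1_S. destruct N as [|N].
  - rewrite sum_n_m_1_0; lra.
  - specialize (IH ltac:(lia)). specialize (Huv (S N) ltac:(lia)). lra.
Qed.

Fixpoint nested_sum (fs : list (nat -> R)) (h : nat -> R) (N : nat) : R :=
  match fs with
  | [] => h N
  | f :: fs' => sum_n_m (fun n => f n * nested_sum fs' h n) 1 N
  end.

Definition nonneg_on_pos (f : nat -> R) : Prop := forall n, (1 <= n)%nat -> 0 <= f n.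

Lemma nested_trunc_app fs gs N :
  nested_trunc (fs ++ gs) N = nested_sum fs (nested_trunc gs) N.
Proof.
  revert N; induction fs as [|f fs IH]; intros N; simpl; [reflexivity|].
  apply sum_n_m_ext; intros n; now rewrite IH.
Qed.

Lemma nested_trunc_nonneg fs : List.Forall nonneg_on_pos fs -> forall N, 0 <= nested_trunc fs N.
Proof.
  induction 1 as [|f fs Hf Hfs IH]; intros N; simpl; [lra|].
  apply sum_n_m_nonneg_loc; intros n Hn.
  apply Rmult_le_pos; [apply Hf; lia | apply IH].
Qed.

Lemma nested_trunc_incr fs : List.Forall nonneg_on_pos fs ->
  forall N, nested_trunc fs N <= nested_trunc fs (S N).
Proof.
  destruct 1 as [|f fs Hf Hfs]; intros N; simpl; [lra|].
  rewrite sum_n_m_1_S.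
  assert (0 <= f (S N) * nested_trunc fs (S N)).
  { apply Rmult_le_pos; [apply Hf; lia | now apply nested_trunc_nonneg]. }
  lra.
Qed.

Lemma nested_sum_le fs h h' : List.Forall nonneg_on_pos fs ->
  (forall n, h n <= h' n) -> forall N, nested_sum fs h N <= nested_sum fs h' N.
Proof.
  intros Hfs Hh; induction Hfs as [|f fs Hf Hfs IH]; intros N; simpl; [apply Hh|].
  apply sum_n_m_le_loc; intros n Hn.
  apply Rmult_le_compat_l; [apply Hf; lia | apply IH].
Qed.

Lemma nested_sum_scal_l fs c h N :
  nested_sum fs (fun n => c * h n) N = c * nested_sum fs h N.
Proof.
  revert N; induction fs as [|f fs IH]; intros N; simpl; [reflexivity|].
  rewrite <- sum_n_m_scal_l. apply sum_n_m_ext; intros n. rewrite IH. change (f n * (c * nested_sum fs h n) = c * (f n * nested_sum fs h n)); ring.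
Qed.

Lemma is_lim_seq_nested_sum fs (h : nat -> nat -> R) (l : nat -> R) :
  (forall n, is_lim_seq (fun m => h m n) (l n)) ->
  forall N, is_lim_seq (fun m => nested_sum fs (h m) N) (nested_sum fs l N).
Proof.
  intros Hh; induction fs as [|f fs IH]; intros N; simpl; [apply Hh|].
  apply is_lim_seq_sum_n_m; intros n _.
  apply is_lim_seq_mult'; [apply is_lim_seq_const | apply IH].
Qed.

Lemma INR_ge_1 n : (1 <= n)%nat -> 1 <= INR n.
Proof. intros Hn; exact (le_INR 1 n Hn). Qed.

Lemma inv_pow_pos k n : (1 <= n)%nat -> 0 < inv_pow k n.
Proof.
  intros Hn; pose proof (INR_ge_1 n Hn).
  apply Rinv_0_lt_compat, pow_lt; lra.
Qed.

Lemma inv_pow_antitone k k' n : (1 <= n)%nat -> (k' <= k)%nat -> inv_pow k n <= inv_pow k' n.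
Proof.
  intros Hn Hk; pose proof (INR_ge_1 n Hn).
  apply Rinv_le_contravar; [apply pow_lt; lra | now apply Rle_pow].
Qed.

Lemma inv_pow_at_1 k : inv_pow k 1 = 1.
Proof. unfold inv_pow; simpl. now rewrite pow1, Rinv_1. Qed.

Lemma inv_pow_lt_1 p n : (1 <= p)%nat -> (2 <= n)%nat -> inv_pow p n < 1.
Proof.
  intros Hp Hn. apply Rle_lt_trans with (inv_pow 1 n); [apply inv_pow_antitone; lia|].
  unfold inv_pow; rewrite pow_1. pose proof (le_INR 2 n Hn); simpl in *.
  rewrite <- Rinv_1. apply Rinv_lt_contravar; lra.
Qed.

Lemma nonneg_map_inv_pow ks : List.Forall nonneg_on_pos (map inv_pow ks).
Proof.
  apply List.Forall_map, List.Forall_forall; intros k _ n Hn. now apply Rlt_le, inv_pow_pos.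
Qed.

Lemma zeta_star_trunc_cons k ks N :
  zeta_star_trunc (k :: ks) N = sum_n_m (fun n => inv_pow k n * zeta_star_trunc ks n) 1 N.
Proof. reflexivity. Qed.

Lemma zeta_star_trunc_app ks ks' N :
  zeta_star_trunc (ks ++ ks') N = nested_sum (map inv_pow ks) (zeta_star_trunc ks') N.
Proof. unfold zeta_star_trunc. now rewrite map_app, nested_trunc_app. Qed.

Lemma zeta_star_trunc_nonneg ks N : 0 <= zeta_star_trunc ks N.
Proof. apply nested_trunc_nonneg, nonneg_map_inv_pow. Qed.

Lemma zeta_star_trunc_incr ks N : zeta_star_trunc ks N <= zeta_star_trunc ks (S N).
Proof. apply nested_trunc_incr, nonneg_map_inv_pow. Qed.
Lemma inv_le_twice_sqrt_diff a b : 0 <= a -> 0 < b -> b * b = a * a + 1 -> / b <= 2 * b - 2 * a.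
Proof.
  intros Ha Hb Hab. assert (a <= b) by nra.
  apply Rmult_le_reg_l with b; [lra|]. rewrite Rinv_r; nra.
Qed.

Lemma inv_cube_le_inv_diff a b : 1 <= a -> 0 < b -> b * b = a * a + 1 ->
  / b ^ 3 <= 2 / a - 2 / b.
Proof.
  intros Ha Hb Hab. assert (a <= b) by nra.
  replace (2 / a - 2 / b) with (2 * (b - a) / (a * b)) by (field; lra).
  assert (Hkey : a <= 2 * b * b * (b - a)) by nra.
  apply Rmult_le_reg_l with (a * b ^ 3); [apply Rmult_lt_0_compat; [lra | apply pow_lt; lra]|].
  field_simplify; [nra | lra | lra].
Qed.

Lemma sqrt_INR_S_sq n :
  sqrt (INR (S n)) * sqrt (INR (S n)) = sqrt (INR n) * sqrt (INR n) + 1.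
Proof. rewrite !sqrt_sqrt, S_INR; [lra | apply pos_INR | apply pos_INR]. Qed.

Lemma sum_inv_sqrt_le N : (1 <= N)%nat ->
  sum_n_m (fun n => / sqrt (INR n)) 1 N <= 2 * sqrt (INR N).
Proof.
  intros HN. eapply Rle_trans.
  - apply (sum_n_m_le_telescope _ (fun n => 2 * sqrt (INR n))); [|exact HN].
    intros n _. apply inv_le_twice_sqrt_diff; [apply sqrt_pos | | apply sqrt_INR_S_sq].
    apply sqrt_lt_R0, lt_0_INR; lia.
  - cbv beta. change (INR 1) with 1. rewrite sqrt_1, Rinv_1. lra.
Qed.

Lemma sum_inv_sqrt_cube_le N : sum_n_m (fun n => / sqrt (INR n) ^ 3) 1 N <= 3.
Proof.
  destruct N as [|N]; [rewrite sum_n_m_1_0; lra|].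
  eapply Rle_trans.
  - apply (sum_n_m_le_telescope _ (fun n => - (2 / sqrt (INR n)))); [|lia].
    intros n Hn.
    assert (Ha : 1 <= sqrt (INR n)) by (rewrite <- sqrt_1; apply sqrt_le_1_alt, INR_ge_1, Hn).
    assert (Hb : 0 < sqrt (INR (S n))) by (apply sqrt_lt_R0, lt_0_INR; lia).
    pose proof (inv_cube_le_inv_diff _ _ Ha Hb (sqrt_INR_S_sq n)).
    lra.
  - cbv beta. change (INR 1) with 1. rewrite sqrt_1, pow1, Rinv_1.
    assert (0 < sqrt (INR (S N))) by (apply sqrt_lt_R0, lt_0_INR; lia).
    assert (0 < 2 / sqrt (INR (S N))) by (apply Rdiv_lt_0_compat; lra).
    lra.
Qed.

Lemma zeta_star_trunc_ones_le s N : (1 <= N)%nat ->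
  zeta_star_trunc (repeat 1%nat s) N <= 2 ^ s * sqrt (INR N).
Proof.
  revert N; induction s as [|s IH]; intros N HN.
  - change (1 <= 1 * sqrt (INR N)). rewrite Rmult_1_l, <- sqrt_1. apply sqrt_le_1_alt, INR_ge_1, HN.
  - change (repeat 1%nat (S s)) with (1%nat :: repeat 1%nat s).
    rewrite zeta_star_trunc_cons.
    apply Rle_trans with (sum_n_m (fun n => 2 ^ s * / sqrt (INR n)) 1 N).
    + apply sum_n_m_le_loc; intros n Hn.
      assert (Hsn : 0 < sqrt (INR n)) by (apply sqrt_lt_R0, lt_0_INR; lia).
      replace (2 ^ s * / sqrt (INR n)) with (inv_pow 1 n * (2 ^ s * sqrt (INR n))).
      * apply Rmult_le_compat_l; [now apply Rlt_le, inv_pow_pos | apply IH; lia].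
      * unfold inv_pow. rewrite pow_1, <- (sqrt_sqrt (INR n)) at 1 by apply pos_INR.
        field. lra.
    + rewrite sum_n_m_scal_l. change (2 ^ S s) with (2 * 2 ^ s).
      pose proof (sum_inv_sqrt_le N HN). pose proof (pow_lt 2 s ltac:(lra)). nra.
Qed.

Lemma zeta_star_trunc_le_ones ks : List.Forall (fun k => (1 <= k)%nat) ks ->
  forall N, zeta_star_trunc ks N <= zeta_star_trunc (repeat 1%nat (length ks)) N.
Proof.
  induction 1 as [|k ks Hk Hks IH]; intros N; [apply Rle_refl|].
  change (repeat 1%nat (length (k :: ks))) with (1%nat :: repeat 1%nat (length ks)).
  rewrite !zeta_star_trunc_cons. apply sum_n_m_le_loc; intros n Hn.
  apply Rmult_le_compat; [now apply Rlt_le, inv_pow_pos | apply zeta_star_trunc_nonneg | |apply IH].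
  apply inv_pow_antitone; lia.
Qed.

Lemma zeta_star_trunc_bounded k1 ks : (2 <= k1)%nat -> List.Forall (fun k => (1 <= k)%nat) ks ->
  forall N, zeta_star_trunc (k1 :: ks) N <= 3 * 2 ^ length ks.
Proof.
  intros Hk1 Hks N. rewrite zeta_star_trunc_cons.
  apply Rle_trans with (sum_n_m (fun n => 2 ^ length ks * / sqrt (INR n) ^ 3) 1 N).
  - apply sum_n_m_le_loc; intros n Hn.
    assert (Hsn : 0 < sqrt (INR n)) by (apply sqrt_lt_R0, lt_0_INR; lia).
    apply Rle_trans with (inv_pow 2 n * (2 ^ length ks * sqrt (INR n))).
    + apply Rmult_le_compat;
        [now apply Rlt_le, inv_pow_pos | apply zeta_star_trunc_nonneg
        | apply inv_pow_antitone; lia |].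
      eapply Rle_trans; [now apply zeta_star_trunc_le_ones|].
      apply zeta_star_trunc_ones_le; lia.
    + right. unfold inv_pow.
      rewrite <- (sqrt_sqrt (INR n)) at 1 by apply pos_INR. field. lra.
  - rewrite sum_n_m_scal_l. pose proof (sum_inv_sqrt_cube_le N).
    pose proof (pow_lt 2 (length ks) ltac:(lra)). nra.
Qed.

Lemma ex_finite_lim_zeta_star_trunc k1 ks : (2 <= k1)%nat ->
  List.Forall (fun k => (1 <= k)%nat) ks -> ex_finite_lim_seq (zeta_star_trunc (k1 :: ks)).
Proof.
  intros Hk1 Hks. apply ex_finite_lim_seq_incr with (3 * 2 ^ length ks);
    [apply zeta_star_trunc_incr | now apply zeta_star_trunc_bounded].
Qed.

Lemma euler_prod_trunc_S p N : (1 <= N)%nat ->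
  euler_prod_trunc p (S N) = euler_prod_trunc p N * / (1 - inv_pow p (S N)).
Proof. intros HN; destruct N; [lia | reflexivity]. Qed.

Lemma euler_factor_bounds p N : (1 <= p)%nat -> (1 <= N)%nat ->
  0 < inv_pow p (S N) < 1 /\ 1 <= / (1 - inv_pow p (S N)).
Proof.
  intros Hp HN. assert (Hx : 0 < inv_pow p (S N) < 1).
  { split; [apply inv_pow_pos | apply inv_pow_lt_1]; lia. }
  split; [exact Hx|]. rewrite <- Rinv_1 at 1. apply Rinv_le_contravar; lra.
Qed.

Lemma euler_prod_trunc_ge_1 p N : (1 <= p)%nat -> 1 <= euler_prod_trunc p N.
Proof.
  intros Hp. induction N as [|N IH]; [simpl; lra|].
  destruct N as [|N]; [simpl; lra|].
  rewrite euler_prod_trunc_S by lia.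
  destruct (euler_factor_bounds p (S N)) as [_ Hf]; [lia | lia |]. nra.
Qed.

Lemma euler_prod_trunc_incr p N : (1 <= p)%nat ->
  euler_prod_trunc p N <= euler_prod_trunc p (S N).
Proof.
  intros Hp. destruct N as [|N]; [right; reflexivity|].
  rewrite (euler_prod_trunc_S p (S N)) by lia.
  destruct (euler_factor_bounds p (S N)) as [_ Hf]; [lia | lia |].
  pose proof (euler_prod_trunc_ge_1 p (S N) Hp). nra.
Qed.

Lemma euler_prod_trunc_antitone p p' N : (1 <= p' <= p)%nat ->
  euler_prod_trunc p N <= euler_prod_trunc p' N.
Proof.
  intros Hp. induction N as [|N IH]; [apply Rle_refl|].
  destruct N as [|N]; [apply Rle_refl|].
  rewrite (euler_prod_trunc_S p), (euler_prod_trunc_S p') by lia.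
  destruct (euler_factor_bounds p (S N)) as [Hx Hf]; [lia | lia |].
  destruct (euler_factor_bounds p' (S N)) as [Hx' _]; [lia | lia |].
  pose proof (inv_pow_antitone p p' (S (S N)) ltac:(lia) ltac:(lia)).
  pose proof (euler_prod_trunc_ge_1 p (S N) ltac:(lia)).
  apply Rmult_le_compat; [lra | lra | exact IH |].
  apply Rinv_le_contravar; lra.
Qed.

Lemma euler_prod_trunc_2 N : (1 <= N)%nat ->
  euler_prod_trunc 2 N = 2 * INR N / (INR N + 1).
Proof.
  induction N as [|N IH]; intros HN; [lia|].
  destruct N as [|N]; [simpl; field|].
  rewrite euler_prod_trunc_S, IH by lia. unfold inv_pow.
  rewrite (S_INR (S N)). pose proof (INR_ge_1 (S N) ltac:(lia)).
  field; repeat split; nra.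
Qed.

Lemma euler_prod_trunc_2_le N : euler_prod_trunc 2 N <= 2.
Proof.
  destruct N as [|N]; [simpl; lra|].
  rewrite euler_prod_trunc_2 by lia. pose proof (INR_ge_1 (S N) ltac:(lia)).
  apply Rmult_le_reg_r with (INR (S N) + 1); [lra|].
  unfold Rdiv. rewrite Rmult_assoc, Rinv_l; lra.
Qed.

Lemma ex_finite_lim_euler_prod_trunc p : (2 <= p)%nat -> ex_finite_lim_seq (euler_prod_trunc p).
Proof.
  intros Hp. apply ex_finite_lim_seq_incr with 2.
  - intros N; apply euler_prod_trunc_incr; lia.
  - intros N. eapply Rle_trans; [apply (euler_prod_trunc_antitone p 2); lia|].
    apply euler_prod_trunc_2_le.
Qed.

Lemma zeta_star_trunc_repeat_S p m N :
  zeta_star_trunc (repeat p (S m)) (S N)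
  = zeta_star_trunc (repeat p (S m)) N + inv_pow p (S N) * zeta_star_trunc (repeat p m) (S N).
Proof.
  change (repeat p (S m)) with (p :: repeat p m).
  rewrite !zeta_star_trunc_cons. apply sum_n_m_1_S.
Qed.

Lemma zeta_star_trunc_repeat_at_1 p m : zeta_star_trunc (repeat p m) 1 = 1.
Proof.
  induction m as [|m IH]; [reflexivity|].
  change (repeat p (S m)) with (p :: repeat p m).
  rewrite zeta_star_trunc_cons, sum_n_m_1_S, sum_n_m_1_0, IH, inv_pow_at_1. ring.
Qed.

Lemma zeta_star_trunc_repeat_mono p N : (1 <= N)%nat ->
  forall m, zeta_star_trunc (repeat p m) N <= zeta_star_trunc (repeat p (S m)) N.
Proof.
  induction N as [|N IH]; intros HN; [lia|].
  destruct N as [|N]; intros m; [rewrite !zeta_star_trunc_repeat_at_1; lra|].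
  specialize (IH ltac:(lia)).
  assert (Hx : 0 < inv_pow p (S (S N))) by (apply inv_pow_pos; lia).
  induction m as [|m IHm].
  - rewrite zeta_star_trunc_repeat_S. specialize (IH 0%nat).
    change (zeta_star_trunc (repeat p 0) ?n) with 1 in *. nra.
  - rewrite (zeta_star_trunc_repeat_S p (S m)), (zeta_star_trunc_repeat_S p m) at 1.
    specialize (IH (S m)). nra.
Qed.

Lemma zeta_star_trunc_repeat_le_euler p N : (1 <= p)%nat ->
  forall m, zeta_star_trunc (repeat p m) N <= euler_prod_trunc p N.
Proof.
  intros Hp. induction N as [|N IH]; intros m.
  { destruct m as [|m]; [apply Rle_refl|].
    change (repeat p (S m)) with (p :: repeat p m).
    rewrite zeta_star_trunc_cons, sum_n_m_1_0. simpl; lra. }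
  destruct N as [|N]; [rewrite zeta_star_trunc_repeat_at_1; simpl; lra|].
  rewrite euler_prod_trunc_S by lia.
  destruct (euler_factor_bounds p (S N)) as [Hx Hf]; [lia | lia |].
  pose proof (euler_prod_trunc_ge_1 p (S N) Hp).
  set (x := inv_pow p (S (S N))) in *. set (E := euler_prod_trunc p (S N)) in *.
  assert (HE : E + x * (E * / (1 - x)) = E * / (1 - x)) by (field; lra).
  induction m as [|m IHm].
  - change (1 <= E * / (1 - x)). nra.
  - rewrite zeta_star_trunc_repeat_S; fold x. specialize (IH (S m)).
    pose proof (zeta_star_trunc_nonneg (repeat p m) (S (S N))). nra.
Qed.

Lemma is_lim_seq_affine_rec (u a : nat -> R) (x α : R) :
  ex_finite_lim_seq u -> x <> 1 -> (forall m, u (S m) = a m + x * u m) ->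
  is_lim_seq a α -> is_lim_seq u (α * / (1 - x)).
Proof.
  intros [l Hl] Hx Hrec Ha.
  assert (Hl' : is_lim_seq (fun m => u (S m)) (α + x * l)).
  { apply is_lim_seq_ext with (fun m => a m + x * u m); [intros m; now rewrite Hrec|].
    apply is_lim_seq_plus'; [exact Ha|]. apply is_lim_seq_mult'; [apply is_lim_seq_const | exact Hl]. }
  apply is_lim_seq_incr_1 in Hl.
  assert (Hfix : l = α + x * l).
  { apply Rbar_finite_eq. now rewrite <- (is_lim_seq_unique _ _ Hl), <- (is_lim_seq_unique _ _ Hl'). }
  apply is_lim_seq_incr_1 in Hl.
  replace (α * / (1 - x)) with l; [exact Hl|].
  field_simplify_eq; [lra | lra].
Qed.

Lemma is_lim_zeta_star_trunc_repeat p N : (1 <= p)%nat -> (1 <= N)%nat ->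
  is_lim_seq (fun m => zeta_star_trunc (repeat p m) N) (euler_prod_trunc p N).
Proof.
  intros Hp. induction N as [|N IH]; intros HN; [lia|].
  destruct N as [|N].
  - apply is_lim_seq_ext with (fun _ => 1); [intros m; now rewrite zeta_star_trunc_repeat_at_1|].
    apply is_lim_seq_const.
  - rewrite euler_prod_trunc_S by lia.
    destruct (euler_factor_bounds p (S N)) as [Hx _]; [lia | lia |].
    apply is_lim_seq_affine_rec with (a := fun m => zeta_star_trunc (repeat p (S m)) (S N)).
    + apply ex_finite_lim_seq_incr with (euler_prod_trunc p (S (S N))).
      * apply zeta_star_trunc_repeat_mono; lia.
      * now apply zeta_star_trunc_repeat_le_euler.
    + lra.
    + intros m; apply zeta_star_trunc_repeat_S.
    + apply (is_lim_seq_incr_1 (fun m => zeta_star_trunc (repeat p m) (S N))), IH; lia.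
Qed.

(* lim_N A m N lies between A m N, which tends to B N as m grows, and lim B. *)
Lemma is_lim_seq_Lim_seq_interchange (A : nat -> nat -> R) (B : nat -> R) :
  (forall m N, A m N <= A m (S N)) ->
  (forall m, ex_finite_lim_seq (A m)) ->
  (forall m N, A m N <= B N) ->
  eventually (fun N => is_lim_seq (fun m => A m N) (B N)) ->
  ex_finite_lim_seq B ->
  is_lim_seq (fun m => real (Lim_seq (A m))) (Lim_seq B).
Proof.
  intros Hincr HA Hle [N0 Hlim] [L HL].
  rewrite (is_lim_seq_unique _ _ HL).
  assert (Ha : forall m, is_lim_seq (A m) (real (Lim_seq (A m)))).
  { intros m. destruct (HA m) as [l Hl]. now rewrite (is_lim_seq_unique _ _ Hl). }
  assert (Hup : forall m, real (Lim_seq (A m)) <= L).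
  { intros m. exact (is_lim_seq_le _ _ _ _ (Hle m) (Ha m) HL). }
  assert (Hlow : forall m N, A m N <= real (Lim_seq (A m))).
  { intros m. exact (is_lim_seq_incr_compare _ _ (Ha m) (Hincr m)). }
  apply is_lim_seq_spec; intros eps.
  apply is_lim_seq_spec in HL. destruct (HL (pos_div_2 eps)) as [N1 HN1].
  set (N := max N0 N1).
  specialize (Hlim N (Nat.le_max_l _ _)). apply is_lim_seq_spec in Hlim.
  destruct (Hlim (pos_div_2 eps)) as [M HM].
  exists M; intros m Hm.
  specialize (HM m Hm). specialize (HN1 N (Nat.le_max_r _ _)).
  specialize (Hlow m N). specialize (Hup m). simpl in *.
  apply Rabs_def2 in HM. apply Rabs_def2 in HN1. apply Rabs_def1; lra.
Qed.

Definition last_factor (k : nat) : nat -> R := fun n => 2 / (INR n ^ (k - 1) * (INR n + 1)).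

Lemma rhs_i_trunc_app_last L k N :
  rhs_i_trunc (L ++ [k]) N = nested_sum (map inv_pow L) (nested_trunc [last_factor k]) N.
Proof. unfold rhs_i_trunc. rewrite removelast_last, last_last. apply nested_trunc_app. Qed.

Lemma nested_trunc_last_factor k N : (1 <= k)%nat ->
  nested_trunc [last_factor k] N = sum_n_m (fun n => inv_pow k n * euler_prod_trunc 2 n) 1 N.
Proof.
  intros Hk. apply sum_n_m_ext_loc; intros n Hn.
  rewrite euler_prod_trunc_2 by lia. pose proof (INR_ge_1 n ltac:(lia)).
  unfold last_factor, inv_pow. destruct k as [|k]; [lia|].
  replace (S k - 1)%nat with k by lia.
  assert (INR n ^ k <> 0) by (apply pow_nonzero; lra).
  simpl. field. lra.
Qed.

Lemma zeta_star_trunc_cons_repeat_2_le k m N : (1 <= k)%nat ->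
  zeta_star_trunc (k :: repeat 2%nat m) N <= nested_trunc [last_factor k] N.
Proof.
  intros Hk. rewrite zeta_star_trunc_cons, nested_trunc_last_factor by exact Hk.
  apply sum_n_m_le_loc; intros n Hn.
  apply Rmult_le_compat_l; [now apply Rlt_le, inv_pow_pos|].
  apply zeta_star_trunc_repeat_le_euler; lia.
Qed.

Lemma is_lim_zeta_star_trunc_cons_repeat_2 k N : (1 <= k)%nat ->
  is_lim_seq (fun m => zeta_star_trunc (k :: repeat 2%nat m) N) (nested_trunc [last_factor k] N).
Proof.
  intros Hk. rewrite nested_trunc_last_factor by exact Hk.
  apply is_lim_seq_ext with
    (fun m => sum_n_m (fun n => inv_pow k n * zeta_star_trunc (repeat 2%nat m) n) 1 N);
    [reflexivity|].
  apply is_lim_seq_sum_n_m; intros n Hn.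
  apply is_lim_seq_mult'; [apply is_lim_seq_const|].
  apply is_lim_zeta_star_trunc_repeat; lia.
Qed.

Lemma nested_trunc_last_factor_le k N : (1 <= k)%nat ->
  nested_trunc [last_factor k] N <= 2 * zeta_star_trunc [k] N.
Proof.
  intros Hk. rewrite nested_trunc_last_factor, zeta_star_trunc_cons, <- sum_n_m_scal_l by exact Hk.
  apply sum_n_m_le_loc; intros n Hn.
  pose proof (inv_pow_pos k n ltac:(lia)). pose proof (euler_prod_trunc_2_le n).
  change (zeta_star_trunc [] n) with 1. nra.
Qed.

Lemma ex_finite_lim_rhs_i_trunc L k : (1 <= k)%nat ->
  ex_finite_lim_seq (zeta_star_trunc (L ++ [k])) -> ex_finite_lim_seq (rhs_i_trunc (L ++ [k])).
Proof.
  intros Hk [l Hl]. apply ex_finite_lim_seq_incr with (2 * l).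
  - intros N. unfold rhs_i_trunc. rewrite removelast_last, last_last.
    apply nested_trunc_incr, List.Forall_app; split; [apply nonneg_map_inv_pow|].
    constructor; [|constructor]. intros n Hn. pose proof (INR_ge_1 n Hn).
    apply Rdiv_le_0_compat; [lra|]. apply Rmult_lt_0_compat; [apply pow_lt|]; lra.
  - intros N. rewrite rhs_i_trunc_app_last.
    eapply Rle_trans.
    { apply nested_sum_le with (h' := fun n => 2 * zeta_star_trunc [k] n);
        [apply nonneg_map_inv_pow | intros n; now apply nested_trunc_last_factor_le]. }
    rewrite nested_sum_scal_l, <- zeta_star_trunc_app.
    pose proof (is_lim_seq_incr_compare _ _ Hl (zeta_star_trunc_incr _) N). lra.
Qed.

Lemma is_lim_zeta_star_app_repeat_2 L k : (1 <= k)%nat ->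
  (forall m, ex_finite_lim_seq (zeta_star_trunc ((L ++ [k]) ++ repeat 2%nat m))) ->
  ex_finite_lim_seq (rhs_i_trunc (L ++ [k])) ->
  is_lim_seq (fun m => zeta_star ((L ++ [k]) ++ repeat 2%nat m)) (Lim_seq (rhs_i_trunc (L ++ [k]))).
Proof.
  intros Hk HA HB. apply is_lim_seq_Lim_seq_interchange; [| exact HA | | | exact HB].
  - intros m N; apply zeta_star_trunc_incr.
  - intros m N. rewrite <- app_assoc, zeta_star_trunc_app, rhs_i_trunc_app_last.
    apply nested_sum_le; [apply nonneg_map_inv_pow|].
    intros n; now apply zeta_star_trunc_cons_repeat_2_le.
  - exists 0%nat; intros N _. rewrite rhs_i_trunc_app_last.
    apply is_lim_seq_ext with
      (fun m => nested_sum (map inv_pow L) (zeta_star_trunc (k :: repeat 2%nat m)) N).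
    { intros m. now rewrite <- app_assoc, zeta_star_trunc_app. }
    apply is_lim_seq_nested_sum; intros n. now apply is_lim_zeta_star_trunc_cons_repeat_2.
Qed.

Lemma ex_finite_lim_zeta_star_trunc_repeat p m : (2 <= p)%nat ->
  ex_finite_lim_seq (zeta_star_trunc (repeat p m)).
Proof.
  intros Hp. destruct m as [|m].
  - exists 1. apply is_lim_seq_const.
  - apply ex_finite_lim_zeta_star_trunc; [exact Hp|].
    apply List.Forall_forall; intros k Hkm. apply repeat_spec in Hkm. lia.
Qed.

Lemma is_lim_zeta_star_repeat p : (2 <= p)%nat ->
  is_lim_seq (fun m => zeta_star (repeat p m)) (Lim_seq (euler_prod_trunc p)).
Proof.
  intros Hp. apply is_lim_seq_Lim_seq_interchange.
  - intros m N; apply zeta_star_trunc_incr.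
  - intros m; now apply ex_finite_lim_zeta_star_trunc_repeat.
  - intros m N; apply zeta_star_trunc_repeat_le_euler; lia.
  - exists 1%nat; intros N HN. apply is_lim_zeta_star_trunc_repeat; lia.
  - now apply ex_finite_lim_euler_prod_trunc.
Qed.

Theorem corollary6p2 :
  (* (i) *)
  (forall (k1 : nat) (ks : list nat),
      (2 <= k1)%nat -> List.Forall (fun k => (1 <= k)%nat) ks ->
      (forall m : nat, ex_finite_lim_seq (zeta_star_trunc ((k1 :: ks) ++ repeat 2%nat m)))
      /\ ex_finite_lim_seq (rhs_i_trunc (k1 :: ks))
      /\ is_lim_seq (fun m : nat => zeta_star ((k1 :: ks) ++ repeat 2%nat m))
                    (Lim_seq (rhs_i_trunc (k1 :: ks))))
  /\
  (* (ii) *)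
  (forall p : nat, (2 <= p)%nat ->
      (forall m : nat, ex_finite_lim_seq (zeta_star_trunc (repeat p m)))
      /\ ex_finite_lim_seq (euler_prod_trunc p)
      /\ is_lim_seq (fun m : nat => zeta_star (repeat p m)) (Lim_seq (euler_prod_trunc p))).
Proof.
  split.
  - intros k1 ks Hk1 Hks.
    assert (HA : forall m, ex_finite_lim_seq (zeta_star_trunc ((k1 :: ks) ++ repeat 2%nat m))).
    { intros m. apply ex_finite_lim_zeta_star_trunc; [exact Hk1|].
      apply List.Forall_app; split; [exact Hks|].
      apply List.Forall_forall; intros k Hk. apply repeat_spec in Hk. lia. }
    split; [exact HA|].
    destruct (exists_last (l := k1 :: ks) ltac:(discriminate)) as [L [k Hlast]].
    assert (Hk : (1 <= k)%nat).
    { assert (Hin : In k (k1 :: ks)) by (rewrite Hlast; apply in_or_app; right; now left).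
      destruct Hin as [<- | Hin]; [lia | exact (proj1 (List.Forall_forall _ _) Hks k Hin)]. }
    rewrite Hlast in HA |- *.
    assert (HB : ex_finite_lim_seq (rhs_i_trunc (L ++ [k]))).
    { apply ex_finite_lim_rhs_i_trunc; [exact Hk|].
      specialize (HA 0%nat). now rewrite app_nil_r in HA. }
    split; [exact HB|]. now apply is_lim_zeta_star_app_repeat_2.
  - intros p Hp. repeat split.
    + intros m; now apply ex_finite_lim_zeta_star_trunc_repeat.
    + now apply ex_finite_lim_euler_prod_trunc.
    + now apply is_lim_zeta_star_repeat.
Qed.
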